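(* Let $(\widetilde M,\tilde p)$ be a non-compact model surface of revolution with metric $dt^2+f(t)^2d\theta^2$, where $f''(t)+G(t)f(t)=0$, $f(0)=0$, $f'(0)=1$. If $\widetilde M$ admits a finite total curvature $c(\widetilde M)<2\pi$, then the solution $m$ of $m''(t)+G_-(t)m(t)=0$ with $m(0)=0$, $m'(0)=1$, where $G_-:=\min\{G,0\}$, defines a non-compact model surface of revolution $(M^*,p^* )$ with metric $dt^2+m(t)^2d\theta^2$ which admits a finite total curvature.
   Context: A non-compact model surface of revolution is $\mathbb{R}^2$ with the metric $dt^2+h(t)^2d\theta^2$, where $(t,\theta)$ are polar coordinates about the origin and $h:(0,\infty)\to(0,\infty)$ extends to an odd function around $0$ with $h'(0)=1$; its Gauss curvature is $-h''/h$. The total curvature of a surface with Gauss curvature $G$ is $\int G_+\,dA+\int G_-\,dA$ ($G_+=\max\{G,0\}$, $G_-=\min\{G,0\}$, $dA=h(t)\,dt\,d\theta$), and it is finite if both integrals are finite. *)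

From Stdlib Require Import Reals Lra.
Open Scope R_scope.

Definition C2_with (h h1 h2 : R -> R) : Prop :=
  (forall t, derivable_pt_lim h t (h1 t)) /\
  (forall t, derivable_pt_lim h1 t (h2 t)) /\
  continuity h2.

(* A non-compact model surface of revolution: R^2 with metric
   dt^2 + h(t)^2 dtheta^2, where h > 0 on (0,oo), h extends to an odd
   function (here: h is given on all of R and is odd) with h'(0) = 1. *)
Definition model_surface (h : R -> R) : Prop :=
  exists h1 h2, C2_with h h1 h2 /\
    (forall t, h (- t) = - h t) /\
    h1 0 = 1 /\
    (forall t, 0 < t -> 0 < h t).

Definition gauss_curvature (h K : R -> R) : Prop :=
  exists h1 h2, C2_with h h1 h2 /\ forall t, 0 < t -> K t = - h2 t / h t.

Definition Gplus (K : R -> R) (t : R) : R := Rmax (K t) 0.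
Definition Gminus (K : R -> R) (t : R) : R := Rmin (K t) 0.

Definition improper_int0 (g : R -> R) (l : R) : Prop :=
  (forall b, 0 <= b -> inhabited (Riemann_integrable g 0 b)) /\
  (forall eps, 0 < eps -> exists B, forall b (pr : Riemann_integrable g 0 b),
      B <= b -> Rabs (RiemannInt pr - l) < eps).

(* Total curvature  int G_+ dA + int G_- dA  with dA = h dt dtheta,
   theta integrated over [0, 2 pi]; it is finite (equal to c) when both
   improper integrals converge. *)
Definition total_curvature (h : R -> R) (c : R) : Prop :=
  exists K cp cm, gauss_curvature h K /\
    improper_int0 (fun t => Gplus K t * h t) cp /\
    improper_int0 (fun t => Gminus K t * h t) cm /\
    c = 2 * PI * cp + 2 * PI * cm.

Definition finite_total_curvature (h : R -> R) : Prop :=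
  exists c, total_curvature h c.

Definition jacobi_sol (K h : R -> R) : Prop :=
  exists h1 h2,
    (forall t, derivable_pt_lim h t (h1 t)) /\
    (forall t, derivable_pt_lim h1 t (h2 t)) /\
    (forall t, h2 t + K t * h t = 0) /\
    h 0 = 0 /\ h1 0 = 1.

(* Write q := - G_- >= 0, so that m solves m'' = q m.  Picard iteration produces a
   solution, a Gronwall energy estimate makes it unique, and uniqueness makes it odd
   because q is even (f being odd).  As q >= 0, m(t) >= t and m' is nondecreasing, so m
   is a model surface of nonpositive curvature G_-, of total curvature 2 pi (1 - lim m').

   Gauss-Bonnet on the disc of radius b of the surface of f
   reads f'(b) = 1 - (1/2pi) int_{B_b} G dA, which tends to 1 - c/2pi > 0; hence f grows
   linearly and int_0^oo t q(t) dt is finite, because int_0^oo q f dt is.  Finally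
   m <= t m' gives (m' exp (- int_0^t s q(s) ds))' <= 0, so m' <= exp (int_0^oo s q). *)

From Stdlib Require Import Reals.
Open Scope R_scope.
From Stdlib Require Import Lra Lia Classical FunctionalExtensionality.
From Coquelicot Require Import Coquelicot.
(* Imported after Coquelicot, which shadows [fact]. *)
From Stdlib Require Import Factorial.

Lemma derivable_pt_lim_comp_opp (F : R -> R) (x l : R) :
  derivable_pt_lim F (- x) l -> derivable_pt_lim (fun t => F (- t)) x (- l).
Proof.
  intros HF. replace (- l) with (l * -1) by ring.
  apply (derivable_pt_lim_comp Ropp F); [|exact HF].
  replace (-1) with (- (1)) by ring. apply (derivable_pt_lim_opp id), derivable_pt_lim_id.
Qed.

Lemma derivable_continuity (F F' : R -> R) :
  (forall x, derivable_pt_lim F x (F' x)) -> continuity F.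
Proof. intros HF x. apply derivable_continuous_pt. exists (F' x). apply HF. Qed.

Lemma derivable_pt_lim_exp_comp (F : R -> R) (x l : R) :
  derivable_pt_lim F x l -> derivable_pt_lim (fun s => exp (F s)) x (exp (F x) * l).
Proof. intros HF. apply (derivable_pt_lim_comp F exp); [exact HF|apply derivable_pt_lim_exp]. Qed.

Lemma derivative_of_reflection_symmetric (F F' : R -> R) (c : R) :
  (forall t, F (- t) = c * F t) -> (forall x, derivable_pt_lim F x (F' x)) ->
  forall x, F' (- x) = - c * F' x.
Proof.
  intros Hsym HF x.
  assert (H1 : derivable_pt_lim (fun s => F (- s)) x (- F' (- x)))
    by apply derivable_pt_lim_comp_opp, HF.
  assert (H2 : derivable_pt_lim (fun s => F (- s)) x (c * F' x)).
  { replace (fun s => F (- s)) with (fun s => c * F s)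
      by (apply functional_extensionality; intros s; rewrite Hsym; reflexivity).
    apply (derivable_pt_lim_scal F), HF. }
  pose proof (uniqueness_limite _ _ _ _ H1 H2). lra.
Qed.

Lemma nondecreasing_of_derivative (F F' : R -> R) (a b : R) : a <= b ->
  (forall c, a <= c <= b -> derivable_pt_lim F c (F' c)) ->
  (forall c, a <= c <= b -> 0 <= F' c) -> F a <= F b.
Proof.
  intros Hab HF HF'. destruct (Rle_lt_or_eq_dec a b Hab) as [Hlt| ->]; [|lra].
  destruct (MVT_cor2 F F' a b) as [c [Hc1 Hc2]]; [lra|auto|].
  assert (0 <= F' c) by (apply HF'; lra). nra.
Qed.

Lemma constant_of_derivative (F F' : R -> R) (a b : R) : a <= b ->
  (forall c, a <= c <= b -> derivable_pt_lim F c (F' c)) ->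
  (forall c, a <= c <= b -> F' c = 0) -> F a = F b.
Proof.
  intros Hab HF HF'. apply Rle_antisym.
  - apply (nondecreasing_of_derivative F F'); auto. intros c Hc. rewrite (HF' c Hc); lra.
  - enough (- F a <= - F b) by lra.
    apply (nondecreasing_of_derivative (fun x => - F x) (fun x => - F' x)); auto.
    + intros c Hc; apply (derivable_pt_lim_opp F); auto.
    + intros c Hc. rewrite (HF' c Hc); lra.
Qed.

Lemma Rabs_diff_le_of_derivative (F F' H H' : R -> R) (a b : R) : a <= b ->
  (forall c, a <= c <= b -> derivable_pt_lim F c (F' c)) ->
  (forall c, a <= c <= b -> derivable_pt_lim H c (H' c)) ->
  (forall c, a <= c <= b -> Rabs (F' c) <= H' c) ->
  Rabs (F b - F a) <= H b - H a.
Proof.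
  intros Hab HF HH Hb.
  assert (Hlo : H a - F a <= H b - F b).
  { apply (nondecreasing_of_derivative (fun x => H x - F x) (fun x => H' x - F' x)); auto.
    - intros c Hc; apply (derivable_pt_lim_minus H F); auto.
    - intros c Hc; specialize (Hb c Hc); unfold Rabs in Hb; destruct (Rcase_abs (F' c)); lra. }
  assert (Hhi : H a + F a <= H b + F b).
  { apply (nondecreasing_of_derivative (fun x => H x + F x) (fun x => H' x + F' x)); auto.
    - intros c Hc; apply (derivable_pt_lim_plus H F); auto.
    - intros c Hc; specialize (Hb c Hc); unfold Rabs in Hb; destruct (Rcase_abs (F' c)); lra. }
  apply Rabs_le; lra.
Qed.

Lemma linear_growth_of_slope (F F' : R -> R) (a B : R) : 0 <= a -> 0 <= B -> 0 <= F B ->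
  (forall x, derivable_pt_lim F x (F' x)) -> (forall x, B <= x -> a <= F' x) ->
  forall t, 2 * B <= t -> a * t <= 2 * F t.
Proof.
  intros Ha HB HFB HF HF' t Ht.
  assert (F B - a * B <= F t - a * t).
  { apply (nondecreasing_of_derivative (fun x => F x - a * x) (fun x => F' x - a * 1)); [lra| |].
    - intros c _. apply (derivable_pt_lim_minus F (fun x => a * x)); [apply HF|].
      apply (derivable_pt_lim_scal id), derivable_pt_lim_id.
    - intros c Hc. specialize (HF' c ltac:(lra)). lra. }
  nra.
Qed.

Lemma gronwall_nonpos (E E' : R -> R) (l t : R) : 0 <= t ->
  (forall s, 0 <= s <= t -> derivable_pt_lim E s (E' s)) ->
  (forall s, 0 <= s <= t -> E' s <= l * E s) -> E 0 <= 0 -> E t <= 0.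
Proof.
  intros Ht HE Hle H0.
  assert (Hexp : forall s, derivable_pt_lim (fun s => exp (- l * s)) s (exp (- l * s) * (- l * 1))).
  { intros s. apply derivable_pt_lim_exp_comp, (derivable_pt_lim_scal id), derivable_pt_lim_id. }
  assert (Hdecr : - (E 0 * exp (- l * 0)) <= - (E t * exp (- l * t))).
  { apply (nondecreasing_of_derivative (fun s => - (E s * exp (- l * s)))
             (fun s => - (E' s * exp (- l * s) + E s * (exp (- l * s) * (- l * 1))))); auto.
    - intros s Hs. apply (derivable_pt_lim_opp (fun s => E s * exp (- l * s))).
      apply (derivable_pt_lim_mult E (fun s => exp (- l * s))); auto.
    - intros s Hs. specialize (Hle s Hs). pose proof (exp_pos (- l * s)). nra. }
  rewrite Rmult_0_r, exp_0 in Hdecr. pose proof (exp_pos (- l * t)). nra.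
Qed.

Lemma gronwall_two_sided (E E' : R -> R) (l t : R) :
  (forall s, derivable_pt_lim E s (E' s)) ->
  (forall s, Rabs s <= Rabs t -> Rabs (E' s) <= l * E s) -> E 0 <= 0 -> E t <= 0.
Proof.
  intros HE Hgrowth HE0. destruct (Rle_dec 0 t) as [Ht|Ht].
  - apply (gronwall_nonpos E E' l t Ht); [auto| |exact HE0].
    intros s Hs. eapply Rle_trans; [apply Rle_abs|]. apply Hgrowth.
    rewrite !Rabs_right; lra.
  - replace (E t) with (E (- - t)) by (rewrite Ropp_involutive; reflexivity).
    apply (gronwall_nonpos (fun s => E (- s)) (fun s => - E' (- s)) l (- t));
      [lra| | |rewrite Ropp_0; exact HE0].
    + intros s _. apply derivable_pt_lim_comp_opp, HE.
    + intros s Hs. eapply Rle_trans; [apply Rle_abs|]. rewrite Rabs_Ropp. apply Hgrowth.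
      rewrite Rabs_Ropp, (Rabs_left t), Rabs_right; lra.
Qed.

Lemma continuity_bounded (g : R -> R) (T : R) : continuity g ->
  exists Q, forall u, Rabs u <= T -> Rabs (g u) <= Q.
Proof.
  intros Hg.
  destruct (continuity_ab_maj (fun u => Rabs (g u)) (- Rabs T) (Rabs T)) as [x [Hx _]].
  - pose proof (Rabs_pos T). lra.
  - intros c _. apply (continuity_pt_comp g Rabs); [apply Hg|apply Rcontinuity_abs].
  - exists (Rabs (g x)). intros u Hu. apply Hx.
    pose proof (Rle_abs T). pose proof (Rle_abs u). pose proof (Rle_abs (- u)).
    rewrite Rabs_Ropp in *. lra.
Qed.

Lemma continuous_of_continuity (g : R -> R) (x : R) : continuity g -> continuous g x.
Proof. intros Hg. apply continuity_pt_filterlim, Hg. Qed.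

Lemma ex_RInt_of_continuity (g : R -> R) (a b : R) : continuity g -> ex_RInt g a b.
Proof.
  intros Hg. apply (@ex_RInt_continuous R_CompleteNormedModule).
  intros; apply continuous_of_continuity, Hg.
Qed.

Lemma derivable_pt_lim_RInt (g : R -> R) (a x : R) :
  continuity g -> derivable_pt_lim (fun t => RInt g a t) x (g x).
Proof.
  intros Hg. apply is_derive_Reals, (is_derive_RInt g _ a).
  - apply filter_forall; intros b.
    apply (@RInt_correct R_CompleteNormedModule), ex_RInt_of_continuity, Hg.
  - apply continuous_of_continuity, Hg.
Qed.

Lemma RInt_of_derivative (F g : R -> R) (a b : R) : continuity g ->
  (forall x, derivable_pt_lim F x (g x)) -> RInt g a b = F b - F a :> R.
Proof.
  intros Hg HF. apply is_RInt_unique, (is_RInt_derive F g).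
  - intros x _; apply is_derive_Reals, HF.
  - intros x _; apply continuous_of_continuity, Hg.
Qed.

Lemma RInt_at_lower (g : R -> R) (a : R) : RInt g a a = 0 :> R.
Proof. apply (@RInt_point R_CompleteNormedModule). Qed.

Lemma RInt_nondecreasing_bound (g : R -> R) (a b : R) : continuity g ->
  (forall s, 0 <= s -> 0 <= g s) -> 0 <= a <= b -> RInt g 0 a <= RInt g 0 b.
Proof.
  intros Hg Hnn Hab.
  apply (nondecreasing_of_derivative (fun x => RInt g 0 x) g); [lra| |].
  - intros c _. apply derivable_pt_lim_RInt, Hg.
  - intros c Hc. apply Hnn. lra.
Qed.

Lemma RInt_le_of_eventually_le (g h : R -> R) (T b : R) : continuity g -> continuity h ->
  (forall s, 0 <= s -> 0 <= g s) -> (forall s, 0 <= s -> 0 <= h s) ->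
  (forall s, T <= s -> g s <= h s) -> 0 <= T -> 0 <= b ->
  RInt g 0 b <= RInt g 0 T + RInt h 0 b.
Proof.
  intros Hg Hh Hg0 Hh0 Hgh HT Hb.
  assert (Hh_nn : 0 <= RInt h 0 b).
  { pose proof (RInt_nondecreasing_bound h 0 b Hh Hh0 ltac:(lra)) as H.
    rewrite RInt_at_lower in H. exact H. }
  destruct (Rle_dec b T) as [HbT|HbT].
  - pose proof (RInt_nondecreasing_bound g b T Hg Hg0 ltac:(lra)). lra.
  - assert (Hdiff : RInt g 0 b - RInt h 0 b <= RInt g 0 T - RInt h 0 T).
    { enough (- (RInt g 0 T - RInt h 0 T) <= - (RInt g 0 b - RInt h 0 b)) by lra.
      apply (nondecreasing_of_derivative (fun x => - (RInt g 0 x - RInt h 0 x))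
               (fun x => - (g x - h x))); [lra| |].
      - intros c _. apply (derivable_pt_lim_opp (fun x => RInt g 0 x - RInt h 0 x)).
        apply (derivable_pt_lim_minus (fun x => RInt g 0 x) (fun x => RInt h 0 x));
          apply derivable_pt_lim_RInt; auto.
      - intros c Hc. specialize (Hgh c ltac:(lra)). lra. }
    assert (0 <= RInt h 0 T).
    { pose proof (RInt_nondecreasing_bound h 0 T Hh Hh0 ltac:(lra)) as H.
      rewrite RInt_at_lower in H. exact H. }
    lra.
Qed.

Definition converges_at_infty (F : R -> R) (l : R) : Prop :=
  forall eps, 0 < eps -> exists B, forall b, B <= b -> Rabs (F b - l) < eps.

Lemma improper_int0_of_RInt (g : R -> R) (l : R) : continuity g ->
  converges_at_infty (fun b => RInt g 0 b) l -> improper_int0 g l.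
Proof.
  intros Hg Hl. split.
  - intros b Hb. constructor. apply continuity_implies_RiemannInt; auto.
  - intros eps Heps. destruct (Hl eps Heps) as [B HB]. exists B. intros b pr Hb.
    rewrite <- RInt_Reals. apply HB, Hb.
Qed.

Lemma RInt_converges_of_improper_int0 (g h : R -> R) (l : R) : continuity h ->
  (forall t, 0 < t -> g t = h t) -> improper_int0 g l ->
  converges_at_infty (fun b => RInt h 0 b) l.
Proof.
  intros Hh Hgh [Hint Hl] eps Heps. destruct (Hl eps Heps) as [B HB].
  exists (Rmax B 0). intros b Hb.
  pose proof (Rmax_l B 0). pose proof (Rmax_r B 0).
  destruct (Hint b ltac:(lra)) as [pr].
  rewrite <- (RInt_ext g); [rewrite (RInt_Reals g 0 b pr); apply HB; lra|].
  intros x Hx. rewrite Rmin_left, Rmax_right in Hx by lra. apply Hgh; lra.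
Qed.

Lemma le_limit_of_nondecreasing (F : R -> R) (l : R) :
  (forall a b, 0 <= a <= b -> F a <= F b) -> converges_at_infty F l ->
  forall b, 0 <= b -> F b <= l.
Proof.
  intros Hmono Hl b Hb. apply Rnot_lt_le. intros Hlt.
  destruct (Hl (F b - l)) as [B HB]; [lra|].
  specialize (HB (Rmax B b) (Rmax_l B b)).
  assert (F b <= F (Rmax B b)) by (apply Hmono; split; [lra|apply Rmax_r]).
  apply Rabs_def2 in HB. lra.
Qed.

Lemma limit_le_RInt_of_nonpos (g : R -> R) (l b : R) : continuity g ->
  (forall s, 0 <= s -> g s <= 0) -> converges_at_infty (fun b => RInt g 0 b) l -> 0 <= b ->
  l <= RInt g 0 b.
Proof.
  intros Hg Hnp Hl Hb.
  enough (- RInt g 0 b <= - l) by lra.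
  apply (le_limit_of_nondecreasing (fun b => - RInt g 0 b)); [| |exact Hb].
  - intros x y Hxy.
    apply (nondecreasing_of_derivative (fun b => - RInt g 0 b) (fun x => - g x)); [lra| |].
    + intros z _. apply (derivable_pt_lim_opp (fun b => RInt g 0 b)), derivable_pt_lim_RInt, Hg.
    + intros z Hz. specialize (Hnp z ltac:(lra)). lra.
  - intros eps Heps. destruct (Hl eps Heps) as [B HB]. exists B. intros x Hx.
    replace (- RInt g 0 x - - l) with (- (RInt g 0 x - l)) by ring.
    rewrite Rabs_Ropp. apply HB, Hx.
Qed.

Lemma converges_at_infty_of_nondecreasing (F : R -> R) (C : R) :
  (forall a b, 0 <= a <= b -> F a <= F b) -> (forall b, 0 <= b -> F b <= C) ->
  exists l, converges_at_infty F l.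
Proof.
  intros Hmono HC.
  set (E := fun x => exists b, 0 <= b /\ x = F b).
  destruct (completeness E) as [l [Hub Hleast]].
  - exists C. intros x [b [Hb ->]]. apply HC, Hb.
  - exists (F 0), 0. split; [lra|reflexivity].
  - exists l. intros eps Heps.
    assert (Hnear : exists b0, 0 <= b0 /\ l - eps < F b0).
    { apply NNPP. intros Hno. enough (l <= l - eps) by lra.
      apply Hleast. intros x [b [Hb ->]]. apply Rnot_lt_le. intros Hlt.
      apply Hno. exists b; auto. }
    destruct Hnear as [b0 [Hb0 Hlt]]. exists b0. intros b Hb.
    assert (F b <= l) by (apply Hub; exists b; split; [lra|reflexivity]).
    assert (F b0 <= F b) by (apply Hmono; lra).
    apply Rabs_def1; lra.
Qed.

Section SummableIncrements.

Variables (u : nat -> R -> R) (a : nat -> R) (c : R) (r : posreal).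
Hypothesis a_summable : ex_series a.
Hypothesis u_increments : forall k x, Boule c r x -> Rabs (u (S k) x - u k x) <= a k.

Lemma increments_telescope (x : R) (m n : nat) : Boule c r x -> (m <= n)%nat ->
  Rabs (u (S n) x - u m x) <= sum_n_m a m n.
Proof.
  intros Hx Hmn. induction Hmn as [|n Hmn IH].
  - rewrite sum_n_n. apply u_increments, Hx.
  - rewrite sum_n_Sm by lia.
    change (plus (sum_n_m a m n) (a (S n))) with (sum_n_m a m n + a (S n)).
    pose proof (u_increments (S n) x Hx).
    pose proof (Rabs_triang (u (S (S n)) x - u (S n) x) (u (S n) x - u m x)).
    replace (u (S (S n)) x - u (S n) x + (u (S n) x - u m x))
      with (u (S (S n)) x - u m x) in * by ring.
    lra.
Qed.

Lemma increments_uniformly_cauchy (eps : R) : 0 < eps ->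
  exists N, forall x m n, Boule c r x -> (N <= m <= n)%nat -> Rabs (u (S n) x - u m x) < eps.
Proof.
  intros Heps. destruct (Cauchy_ex_series a a_summable (mkposreal eps Heps)) as [N HN].
  exists N. intros x m n Hx Hmn.
  eapply Rle_lt_trans; [apply increments_telescope; [exact Hx|lia]|].
  eapply Rle_lt_trans; [apply Rle_abs|apply (HN m n); lia].
Qed.

Lemma increments_cv (x : R) : Boule c r x ->
  Un_cv (fun k => u k x) (real (Lim_seq (fun k => u k x))).
Proof.
  intros Hx. destruct (Rcomplete.R_complete (fun k => u k x)) as [l Hl].
  - intros eps Heps. destruct (increments_uniformly_cauchy (eps / 2)) as [N HN]; [lra|].
    exists (S N). intros n m Hn Hm. destruct n as [|n]; [lia|]. destruct m as [|m]; [lia|].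
    pose proof (HN x N n Hx ltac:(lia)). pose proof (HN x N m Hx ltac:(lia)).
    unfold Rdist.
    replace (u (S n) x - u (S m) x) with ((u (S n) x - u N x) - (u (S m) x - u N x)) by ring.
    eapply Rle_lt_trans; [apply Rabs_triang|]. rewrite Rabs_Ropp. lra.
  - apply is_lim_seq_Reals in Hl as Hl'. rewrite (is_lim_seq_unique _ _ Hl'). exact Hl.
Qed.

Lemma CVU_of_summable_increments : CVU u (fun x => real (Lim_seq (fun k => u k x))) c r.
Proof.
  intros eps Heps. destruct (increments_uniformly_cauchy (eps / 2)) as [N HN]; [lra|].
  exists N. intros n y Hn Hy. destruct (increments_cv y Hy (eps / 2)) as [N' HN']; [lra|].
  set (k := Nat.max n N').
  specialize (HN' (S k) ltac:(lia)). specialize (HN y n k Hy ltac:(lia)). unfold Rdist in HN'.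
  replace (real (Lim_seq (fun k => u k y)) - u n y)
    with (- (u (S k) y - real (Lim_seq (fun k => u k y))) + (u (S k) y - u n y)) by ring.
  eapply Rle_lt_trans; [apply Rabs_triang|]. rewrite Rabs_Ropp. lra.
Qed.

End SummableIncrements.

Lemma CVU_mult_bounded (u : nat -> R -> R) (g h : R -> R) (c Q : R) (r : posreal) :
  CVU u g c r -> (forall x, Boule c r x -> Rabs (h x) <= Q) ->
  CVU (fun n x => h x * u n x) (fun x => h x * g x) c r.
Proof.
  intros Hu Hh eps Heps.
  assert (HQ : 0 <= Q) by (specialize (Hh c); unfold Boule in Hh;
    rewrite Rminus_diag, Rabs_R0 in Hh; eapply Rle_trans; [apply Rabs_pos|apply Hh, cond_pos]).
  destruct (Hu (eps / (Q + 1))) as [N HN]; [apply Rdiv_lt_0_compat; lra|].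
  exists N. intros n y Hn Hy.
  replace (h y * g y - h y * u n y) with (h y * (g y - u n y)) by ring.
  rewrite Rabs_mult. specialize (HN n y Hn Hy). specialize (Hh y Hy).
  apply Rle_lt_trans with (Q * (eps / (Q + 1))).
  - apply Rmult_le_compat; auto using Rabs_pos. lra.
  - apply Rmult_lt_reg_r with (Q + 1); [lra|].
    replace (Q * (eps / (Q + 1)) * (Q + 1)) with (Q * eps) by (field; lra). nra.
Qed.

Definition taylor_bound (c : R) (n : nat) (t : R) : R := c * Rabs t ^ n / INR (fact n).

Lemma taylor_bound_primitive_nonneg (F g : R -> R) (c : R) (n : nat) (t : R) : 0 <= t ->
  (forall x, derivable_pt_lim F x (g x)) -> F 0 = 0 ->
  (forall u, 0 <= u <= t -> Rabs (g u) <= taylor_bound c n u) ->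
  Rabs (F t) <= taylor_bound c (S n) t.
Proof.
  intros Ht HF F0 Hg. unfold taylor_bound in *. rewrite (Rabs_right t) by lra.
  pose proof (INR_fact_lt_0 n). pose proof (INR_fact_lt_0 (S n)).
  assert (Hcmp := Rabs_diff_le_of_derivative F g (fun u => c / INR (fact (S n)) * u ^ S n)
                    (fun u => c * u ^ n / INR (fact n)) 0 t Ht).
  rewrite F0, Rminus_0_r, pow_i, Rmult_0_r, Rminus_0_r in Hcmp by lia.
  replace (c * t ^ S n / INR (fact (S n))) with (c / INR (fact (S n)) * t ^ S n)
    by (unfold Rdiv; ring).
  apply Hcmp; auto.
  - intros u Hu.
    replace (c * u ^ n / INR (fact n))
      with (c / INR (fact (S n)) * (INR (S n) * u ^ pred (S n))).
    + apply (derivable_pt_lim_scal (fun u => u ^ S n)), derivable_pt_lim_pow.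
    + rewrite fact_simpl, mult_INR. simpl pred. field.
      split; [apply INR_fact_neq_0|apply not_0_INR; lia].
  - intros u Hu. rewrite <- (Rabs_right u) at 2 by lra. apply Hg, Hu.
Qed.

Lemma taylor_bound_primitive (F g : R -> R) (c : R) (n : nat) (t : R) :
  (forall x, derivable_pt_lim F x (g x)) -> F 0 = 0 ->
  (forall u, Rabs u <= Rabs t -> Rabs (g u) <= taylor_bound c n u) ->
  Rabs (F t) <= taylor_bound c (S n) t.
Proof.
  intros HF F0 Hg. destruct (Rle_dec 0 t) as [Ht|Ht].
  - apply (taylor_bound_primitive_nonneg F g); auto.
    intros u Hu. apply Hg. rewrite !Rabs_right; lra.
  - replace (F t) with (- (- F (- - t))) by (rewrite !Ropp_involutive; reflexivity).
    replace (taylor_bound c (S n) t) with (taylor_bound c (S n) (- t))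
      by (unfold taylor_bound; rewrite Rabs_Ropp; reflexivity).
    rewrite Rabs_Ropp.
    apply (taylor_bound_primitive_nonneg (fun s => - F (- s)) (fun s => g (- s))); [lra| | |].
    + intros x. rewrite <- (Ropp_involutive (g (- x))).
      apply (derivable_pt_lim_opp (fun s => F (- s))), derivable_pt_lim_comp_opp, HF.
    + rewrite Ropp_0, F0. ring.
    + intros u Hu. replace (taylor_bound c n u) with (taylor_bound c n (- u))
        by (unfold taylor_bound; rewrite Rabs_Ropp; reflexivity).
      apply Hg. rewrite Rabs_Ropp, (Rabs_left t), Rabs_right; lra.
Qed.

Lemma taylor_bound_le (c : R) (n j : nat) (t T : R) : 0 <= c -> Rabs t <= T -> (j <= n)%nat ->
  taylor_bound c n t <= c * T ^ n / INR (fact j).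
Proof.
  intros Hc Ht Hj. unfold taylor_bound, Rdiv.
  pose proof (INR_fact_lt_0 j). pose proof (INR_fact_lt_0 n).
  assert (INR (fact j) <= INR (fact n)) by (apply le_INR, fact_le; auto).
  apply Rmult_le_compat.
  - apply Rmult_le_pos; [auto|apply pow_le, Rabs_pos].
  - left; apply Rinv_0_lt_compat; auto.
  - apply Rmult_le_compat_l; auto. apply pow_maj_Rabs. rewrite Rabs_Rabsolu; auto.
  - apply Rinv_le_contravar; auto.
Qed.

Lemma ex_series_exp_tail (A c : R) : ex_series (fun k => c * (A ^ S k / INR (fact (S k)))).
Proof.
  assert (He := is_exp_Reals A).
  apply (ex_series_ext (fun k => scal c (scal (pow_n A (S k)) (/ INR (fact (S k)))))).
  - intros k. rewrite pow_n_pow. unfold scal; simpl. unfold mult; simpl. unfold Rdiv. ring.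
  - apply (ex_series_scal_l (V := R_NormedModule)).
    apply (ex_series_incr_1 (fun k => scal (pow_n A k) (/ INR (fact k)))).
    exists (exp A). exact He.
Qed.

(** * Picard iteration *)

Section Picard.

Variable K : R -> R.
Hypothesis K_cont : continuity K.

Fixpoint picard (k : nat) : R -> R :=
  match k with
  | O => fun t => t
  | S k => fun t => t + RInt (fun s => RInt (fun u => - K u * picard k u) 0 s) 0 t
  end.

Definition picard1 (k : nat) (t : R) : R :=
  match k with
  | O => 1
  | S k => 1 + RInt (fun u => - K u * picard k u) 0 t
  end.

Definition picard2 (k : nat) (t : R) : R :=
  match k with
  | O => 0
  | S k => - K t * picard k t
  end.

Lemma picard_derivable (k : nat) (x : R) : derivable_pt_lim (picard k) x (picard1 k x).
Proof.
  revert x. induction k as [|k IH]; intros x; simpl.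
  - apply derivable_pt_lim_id.
  - assert (Hc : continuity (fun u => - K u * picard k u)).
    { apply (continuity_mult (fun u => - K u) (picard k)).
      - apply (continuity_opp K), K_cont.
      - apply (derivable_continuity _ _ IH). }
    pose proof (fun y => derivable_pt_lim_RInt _ 0 y Hc) as Hprim.
    apply (derivable_pt_lim_plus id); [apply derivable_pt_lim_id|].
    apply derivable_pt_lim_RInt, (derivable_continuity _ _ Hprim).
Qed.

Lemma continuity_picard_integrand (k : nat) : continuity (fun u => - K u * picard k u).
Proof.
  apply (continuity_mult (fun u => - K u) (picard k)).
  - apply (continuity_opp K), K_cont.
  - apply (derivable_continuity _ _ (picard_derivable k)).
Qed.

Lemma picard1_derivable (k : nat) (x : R) : derivable_pt_lim (picard1 k) x (picard2 k x).
Proof.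
  destruct k as [|k]; simpl.
  - apply derivable_pt_lim_const.
  - replace (- K x * picard k x) with (0 + - K x * picard k x) by ring.
    apply (derivable_pt_lim_plus (fun _ => 1)); [apply derivable_pt_lim_const|].
    apply (derivable_pt_lim_RInt (fun u => - K u * picard k u)), continuity_picard_integrand.
Qed.

Lemma picard_at_0 (k : nat) : picard k 0 = 0.
Proof. destruct k; simpl; [|rewrite RInt_at_lower]; ring. Qed.

Lemma picard1_at_0 (k : nat) : picard1 k 0 = 1.
Proof. destruct k; simpl; [|rewrite RInt_at_lower]; ring. Qed.

Lemma picard_ge_id (k : nat) (t : R) :
  (forall s, 0 <= s -> K s <= 0) -> 0 <= t -> t <= picard k t.
Proof.
  intros HK. revert t. induction k as [|k IH]; intros t Ht; simpl; [lra|].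
  enough (0 <= RInt (fun s => RInt (fun u => - K u * picard k u) 0 s) 0 t) by lra.
  apply RInt_ge_0; [exact Ht| |].
  - apply ex_RInt_of_continuity, (derivable_continuity _ _ (fun y =>
      derivable_pt_lim_RInt _ 0 y (continuity_picard_integrand k))).
  - intros s Hs. apply RInt_ge_0; [lra|apply ex_RInt_of_continuity, continuity_picard_integrand|].
    intros u Hu. specialize (HK u ltac:(lra)). specialize (IH u ltac:(lra)). nra.
Qed.

Section Increments.

Variables T Q : R.
Hypothesis K_bound : forall u, Rabs u <= T -> Rabs (K u) <= Q.

Lemma picard_increment_of_picard2 (k : nat) :
  (forall t, Rabs t <= T ->
     Rabs (picard2 (S k) t - picard2 k t) <= taylor_bound (Q ^ S k) (S (2 * k)) t) ->
  forall t, Rabs t <= T ->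
    Rabs (picard1 (S k) t - picard1 k t) <= taylor_bound (Q ^ S k) (S (S (2 * k))) t /\
    Rabs (picard (S k) t - picard k t) <= taylor_bound (Q ^ S k) (S (S (S (2 * k)))) t.
Proof.
  intros H2 t Ht.
  assert (H1 : forall u, Rabs u <= Rabs t ->
            Rabs (picard1 (S k) u - picard1 k u) <= taylor_bound (Q ^ S k) (S (S (2 * k))) u).
  { intros u Hu.
    apply (taylor_bound_primitive (fun v => picard1 (S k) v - picard1 k v)
             (fun v => picard2 (S k) v - picard2 k v)).
    - intros x. apply (derivable_pt_lim_minus (picard1 (S k)) (picard1 k)); apply picard1_derivable.
    - rewrite !picard1_at_0. ring.
    - intros v Hv. apply H2. lra. }
  split; [apply H1; lra|].
  apply (taylor_bound_primitive (fun v => picard (S k) v - picard k v)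
           (fun v => picard1 (S k) v - picard1 k v)); [| |exact H1].
  - intros x. apply (derivable_pt_lim_minus (picard (S k)) (picard k)); apply picard_derivable.
  - rewrite !picard_at_0. ring.
Qed.

Lemma picard2_increment (k : nat) (t : R) : Rabs t <= T ->
  Rabs (picard2 (S k) t - picard2 k t) <= taylor_bound (Q ^ S k) (S (2 * k)) t.
Proof.
  revert t. induction k as [|k IH]; intros t Ht.
  - unfold taylor_bound. simpl. rewrite Rminus_0_r, Rabs_mult, Rabs_Ropp.
    replace (Q * 1 * (Rabs t * 1) / 1) with (Q * Rabs t) by field.
    apply Rmult_le_compat_r; [apply Rabs_pos|apply K_bound, Ht].
  - destruct (picard_increment_of_picard2 k IH t Ht) as [_ Hk].
    change (Rabs (- K t * picard (S k) t - - K t * picard k t)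
              <= taylor_bound (Q ^ S (S k)) (S (2 * S k)) t).
    replace (- K t * picard (S k) t - - K t * picard k t)
      with (- K t * (picard (S k) t - picard k t)) by ring.
    replace (S (2 * S k)) with (S (S (S (2 * k)))) by lia.
    replace (taylor_bound (Q ^ S (S k)) (S (S (S (2 * k)))) t)
      with (Q * taylor_bound (Q ^ S k) (S (S (S (2 * k)))) t)
      by (unfold taylor_bound, Rdiv; change (Q ^ S (S k)) with (Q * Q ^ S k); ring).
    rewrite Rabs_mult, Rabs_Ropp.
    apply Rmult_le_compat; auto using Rabs_pos.
Qed.

Lemma picard_increments_le (k : nat) (t : R) : Rabs t <= T ->
  Rabs (picard1 (S k) t - picard1 k t) <= (1 + T) * ((Q * T ^ 2) ^ S k / INR (fact (S k))) /\
  Rabs (picard (S k) t - picard k t) <= (1 + T) * ((Q * T ^ 2) ^ S k / INR (fact (S k))).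
Proof.
  intros Ht.
  assert (HT : 0 <= T) by (pose proof (Rabs_pos t); lra).
  assert (HQ : 0 <= Q) by (eapply Rle_trans; [apply Rabs_pos|apply (K_bound 0)];
                           rewrite Rabs_R0; exact HT).
  assert (Hpow : Q ^ S k * T ^ S (S (2 * k)) = (Q * T ^ 2) ^ S k).
  { rewrite Rpow_mult_distr, <- pow_mult. replace (2 * S k)%nat with (S (S (2 * k))) by lia.
    reflexivity. }
  assert (Hnonneg : 0 <= (Q * T ^ 2) ^ S k / INR (fact (S k))).
  { apply Rdiv_le_0_compat; [apply pow_le, Rmult_le_pos; [exact HQ|apply pow2_ge_0]|].
    apply INR_fact_lt_0. }
  destruct (picard_increment_of_picard2 k (picard2_increment k) t Ht) as [H1 H0].
  split.
  - eapply Rle_trans; [apply H1|]. eapply Rle_trans.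
    + apply (taylor_bound_le _ _ (S k) t T); [apply pow_le; exact HQ|exact Ht|lia].
    + rewrite Hpow. nra.
  - eapply Rle_trans; [apply H0|]. eapply Rle_trans.
    + apply (taylor_bound_le _ _ (S k) t T); [apply pow_le; exact HQ|exact Ht|lia].
    + replace (Q ^ S k * T ^ S (S (S (2 * k))) / INR (fact (S k)))
        with (T * ((Q ^ S k * T ^ S (S (2 * k))) / INR (fact (S k))))
        by (change (T ^ S (S (S (2 * k)))) with (T * T ^ S (S (2 * k))); unfold Rdiv; ring).
      rewrite Hpow. nra.
Qed.

End Increments.

(* [Lim_seq] is total; [picard_CVU] shows that the iterates do converge. *)
Definition picard_limit (t : R) : R := real (Lim_seq (fun k => picard k t)).
Definition picard1_limit (t : R) : R := real (Lim_seq (fun k => picard1 k t)).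

Lemma picard_CVU (r : posreal) : CVU picard picard_limit 0 r /\ CVU picard1 picard1_limit 0 r.
Proof.
  destruct (continuity_bounded K r K_cont) as [Q HQ].
  set (a := fun k => (1 + r) * ((Q * r ^ 2) ^ S k / INR (fact (S k)))).
  assert (Ha : ex_series a) by apply ex_series_exp_tail.
  assert (Hball : forall x, Boule 0 r x -> Rabs x <= r).
  { intros x Hx. unfold Boule in Hx. rewrite Rminus_0_r in Hx. lra. }
  split; apply (CVU_of_summable_increments _ a _ _ Ha); intros k x Hx;
    apply (picard_increments_le r Q HQ k x (Hball x Hx)).
Qed.

Lemma Boule_0_Rabs_succ (x : R) (Hr : 0 < Rabs x + 1) : Boule 0 (mkposreal _ Hr) x.
Proof. unfold Boule. simpl. rewrite Rminus_0_r. lra. Qed.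

Lemma picard_limit_derivable (x : R) : derivable_pt_lim picard_limit x (picard1_limit x).
Proof.
  assert (Hr : 0 < Rabs x + 1) by (pose proof (Rabs_pos x); lra).
  destruct (picard_CVU (mkposreal _ Hr)) as [H0 H1].
  apply (CVU_derivable picard picard1 picard_limit picard1_limit 0 _ H1).
  - intros y Hy. apply (CVU_cv _ _ _ _ H0 y Hy).
  - intros n y _. apply picard_derivable.
  - apply Boule_0_Rabs_succ.
Qed.

Lemma picard1_limit_derivable (x : R) :
  derivable_pt_lim picard1_limit x (- K x * picard_limit x).
Proof.
  assert (Hr : 0 < Rabs x + 1) by (pose proof (Rabs_pos x); lra).
  destruct (picard_CVU (mkposreal _ Hr)) as [H0 H1].
  destruct (continuity_bounded (fun t => - K t) (Rabs x + 1)) as [Q HQ].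
  { apply (continuity_opp K), K_cont. }
  apply (CVU_derivable (fun k => picard1 (S k)) (fun k t => - K t * picard k t)
           picard1_limit (fun t => - K t * picard_limit t) 0 (mkposreal _ Hr)).
  - apply (CVU_mult_bounded _ _ _ _ Q _ H0).
    intros y Hy. apply HQ. unfold Boule in Hy. simpl in Hy. rewrite Rminus_0_r in Hy. lra.
  - intros y Hy. apply is_lim_seq_Reals, (is_lim_seq_incr_1 (fun k => picard1 k y)).
    apply is_lim_seq_Reals, (CVU_cv _ _ _ _ H1 y Hy).
  - intros n y _. apply (picard1_derivable (S n)).
  - apply Boule_0_Rabs_succ.
Qed.

Lemma picard_limit_at_0 : picard_limit 0 = 0.
Proof.
  unfold picard_limit. rewrite (Lim_seq_ext _ (fun _ => 0)) by apply picard_at_0.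
  rewrite Lim_seq_const. reflexivity.
Qed.

Lemma picard1_limit_at_0 : picard1_limit 0 = 1.
Proof.
  unfold picard1_limit. rewrite (Lim_seq_ext _ (fun _ => 1)) by apply picard1_at_0.
  rewrite Lim_seq_const. reflexivity.
Qed.

Lemma picard_limit_ge_id (t : R) :
  (forall s, 0 <= s -> K s <= 0) -> 0 <= t -> t <= picard_limit t.
Proof.
  intros HK Ht.
  assert (Hr : 0 < Rabs t + 1) by (pose proof (Rabs_pos t); lra).
  destruct (picard_CVU (mkposreal _ Hr)) as [H0 _].
  apply (Rle_cv_lim (Un := fun _ => t) (Vn := fun k => picard k t)).
  - intros k. apply picard_ge_id; auto.
  - apply is_lim_seq_Reals, is_lim_seq_const.
  - apply (CVU_cv _ _ _ _ H0), Boule_0_Rabs_succ.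
Qed.

End Picard.

(** * The Jacobi equation *)

Definition jacobi_system (K m m1 : R -> R) : Prop :=
  (forall x, derivable_pt_lim m x (m1 x)) /\ (forall x, derivable_pt_lim m1 x (- K x * m x)).

Lemma jacobi_sol_system (K m : R -> R) :
  jacobi_sol K m <-> exists m1, jacobi_system K m m1 /\ m 0 = 0 /\ m1 0 = 1.
Proof.
  split.
  - intros [m1 [m2 [Hm [Hm1 [Heq [H0 H1]]]]]]. exists m1. repeat split; auto.
    intros x. replace (- K x * m x) with (m2 x) by (specialize (Heq x); lra). apply Hm1.
  - intros [m1 [[Hm Hm1] [H0 H1]]]. exists m1, (fun x => - K x * m x).
    repeat split; auto. intros t. ring.
Qed.

Lemma jacobi_system_picard (K : R -> R) (HK : continuity K) :
  jacobi_system K (picard_limit K) (picard1_limit K).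
Proof. split; intros x; [apply picard_limit_derivable|apply picard1_limit_derivable]; exact HK. Qed.

Lemma jacobi_sol_exists (K : R -> R) : continuity K -> exists m, jacobi_sol K m.
Proof.
  intros HK. exists (picard_limit K). apply jacobi_sol_system.
  exists (picard1_limit K). split; [apply jacobi_system_picard, HK|].
  split; [apply picard_limit_at_0|apply picard1_limit_at_0].
Qed.

Lemma jacobi_system_zero (K D D1 : R -> R) : continuity K -> jacobi_system K D D1 ->
  D 0 = 0 -> D1 0 = 0 -> forall t, D t = 0.
Proof.
  intros HK [HD HD1] H0 H1 t.
  set (E := fun s => D s ^ 2 + D1 s ^ 2).
  set (E' := fun s => 2 * D s * D1 s * (1 - K s)).
  assert (HE : forall x, derivable_pt_lim E x (E' x)).
  { intros x.
    replace (E' x) with (INR 2 * D x ^ 1 * D1 x + INR 2 * D1 x ^ 1 * (- K x * D x))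
      by (unfold E'; simpl; ring).
    apply (derivable_pt_lim_plus (fun s => D s ^ 2) (fun s => D1 s ^ 2));
      apply (derivable_pt_lim_comp _ (fun y => y ^ 2)); auto; apply derivable_pt_lim_pow. }
  destruct (continuity_bounded K (Rabs t) HK) as [Q HQ].
  assert (Hgrowth : forall s, Rabs s <= Rabs t -> Rabs (E' s) <= (1 + Q) * E s).
  { intros s Hs. specialize (HQ s Hs). unfold E', E.
    rewrite Rabs_mult, (Rmult_comm (1 + Q)).
    apply Rmult_le_compat; [apply Rabs_pos|apply Rabs_pos| |].
    - rewrite !Rabs_mult, (Rabs_right 2), <- (pow2_abs (D s)), <- (pow2_abs (D1 s)) by lra.
      pose proof (pow2_ge_0 (Rabs (D s) - Rabs (D1 s))). nra.
    - eapply Rle_trans; [apply Rabs_triang|]. rewrite Rabs_Ropp, Rabs_R1. lra. }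
  assert (HEt : E t <= 0).
  { apply (gronwall_two_sided E E' (1 + Q) t HE Hgrowth). unfold E. rewrite H0, H1. lra. }
  unfold E in HEt. nra.
Qed.

Lemma jacobi_system_unique (K m m1 n n1 : R -> R) : continuity K ->
  jacobi_system K m m1 -> jacobi_system K n n1 -> m 0 = n 0 -> m1 0 = n1 0 ->
  forall t, m t = n t.
Proof.
  intros HK [Hm Hm1] [Hn Hn1] H0 H1 t.
  enough (m t - n t = 0) by lra.
  apply (jacobi_system_zero K (fun s => m s - n s) (fun s => m1 s - n1 s) HK); [split|lra|lra].
  - intros x. apply (derivable_pt_lim_minus m n); auto.
  - intros x. replace (- K x * (m x - n x)) with (- K x * m x - - K x * n x) by ring.
    apply (derivable_pt_lim_minus m1 n1); auto.
Qed.

Lemma jacobi_system_reflect (K m m1 : R -> R) : (forall t, K (- t) = K t) ->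
  jacobi_system K m m1 -> jacobi_system K (fun t => - m (- t)) (fun t => m1 (- t)).
Proof.
  intros Heven [Hm Hm1]. split; intros x.
  - rewrite <- (Ropp_involutive (m1 (- x))).
    apply (derivable_pt_lim_opp (fun t => m (- t))), derivable_pt_lim_comp_opp, Hm.
  - replace (- K x * - m (- x)) with (- (- K (- x) * m (- x))) by (rewrite Heven; ring).
    apply derivable_pt_lim_comp_opp, Hm1.
Qed.

Lemma jacobi_system_odd (K m m1 : R -> R) : continuity K -> (forall t, K (- t) = K t) ->
  jacobi_system K m m1 -> m 0 = 0 -> forall t, m (- t) = - m t.
Proof.
  intros HK Heven Hsys H0 t.
  rewrite (jacobi_system_unique K m m1 (fun t => - m (- t)) (fun t => m1 (- t)) HK Hsys
             (jacobi_system_reflect K m m1 Heven Hsys)); rewrite ?Ropp_0, ?Ropp_involutive; lra.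
Qed.

Lemma continuity_jacobi_rhs (K m m1 : R -> R) : continuity K -> jacobi_system K m m1 ->
  continuity (fun t => - K t * m t).
Proof.
  intros HK [Hm _]. apply (continuity_mult (fun t => - K t) m).
  - apply (continuity_opp K), HK.
  - apply (derivable_continuity m m1 Hm).
Qed.

Lemma model_surface_of_jacobi (K m m1 : R -> R) : continuity K -> jacobi_system K m m1 ->
  m1 0 = 1 -> (forall t, m (- t) = - m t) -> (forall t, 0 < t -> 0 < m t) -> model_surface m.
Proof.
  intros HK Hsys H1 Hodd Hpos. exists m1, (fun t => - K t * m t).
  split; [|auto]. destruct Hsys as [Hm Hm1].
  split; [exact Hm|split; [exact Hm1|apply (continuity_jacobi_rhs K m m1); [|split]; auto]].
Qed.

Section NonpositiveCurvature.

Variables K m m1 : R -> R.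
Hypothesis K_cont : continuity K.
Hypothesis K_nonpos : forall t, 0 <= t -> K t <= 0.
Hypothesis m_jacobi : jacobi_system K m m1.
Hypothesis m_at_0 : m 0 = 0.
Hypothesis m1_at_0 : m1 0 = 1.

Lemma jacobi_ge_id (t : R) : 0 <= t -> t <= m t.
Proof.
  intros Ht.
  rewrite (jacobi_system_unique K m m1 (picard_limit K) (picard1_limit K)); auto.
  - apply picard_limit_ge_id; auto.
  - apply jacobi_system_picard, K_cont.
  - rewrite picard_limit_at_0; auto.
  - rewrite picard1_limit_at_0; auto.
Qed.

Lemma jacobi_slope_nondecreasing (a b : R) : 0 <= a <= b -> m1 a <= m1 b.
Proof.
  intros Hab. apply (nondecreasing_of_derivative m1 (fun s => - K s * m s)); [lra| |].
  - intros c _. apply (proj2 m_jacobi).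
  - intros c Hc. pose proof (K_nonpos c ltac:(lra)). pose proof (jacobi_ge_id c ltac:(lra)). nra.
Qed.

Lemma jacobi_le_mul_slope (t : R) : 0 <= t -> m t <= t * m1 t.
Proof.
  intros Ht.
  enough (0 * m1 0 - m 0 <= t * m1 t - m t) by (rewrite m_at_0 in *; lra).
  apply (nondecreasing_of_derivative (fun s => s * m1 s - m s)
           (fun s => (1 * m1 s + s * (- K s * m s)) - m1 s)); [exact Ht| |].
  - intros c _. apply (derivable_pt_lim_minus (fun s => s * m1 s) m); [|apply (proj1 m_jacobi)].
    apply (derivable_pt_lim_mult id m1); [apply derivable_pt_lim_id|apply (proj2 m_jacobi)].
  - intros c Hc. pose proof (K_nonpos c ltac:(lra)). pose proof (jacobi_ge_id c ltac:(lra)).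
    assert (0 <= - K c * m c) by nra. nra.
Qed.

Lemma jacobi_slope_bounded (C : R) :
  (forall b, 0 <= b -> RInt (fun s => - K s * s) 0 b <= C) ->
  forall t, 0 <= t -> m1 t <= exp C.
Proof.
  intros HC t Ht.
  set (Psi := fun b => RInt (fun s => - K s * s) 0 b).
  assert (HPsi : forall x, derivable_pt_lim Psi x (- K x * x)).
  { intros x. apply (derivable_pt_lim_RInt (fun s => - K s * s)).
    apply (continuity_mult (fun s => - K s) id).
    - apply (continuity_opp K), K_cont.
    - apply derivable_continuous, derivable_id. }
  assert (Hdecr : - (m1 0 * exp (- Psi 0)) <= - (m1 t * exp (- Psi t))).
  { apply (nondecreasing_of_derivative (fun s => - (m1 s * exp (- Psi s)))
      (fun s => - (- K s * m s * exp (- Psi s) + m1 s * (exp (- Psi s) * - (- K s * s))))); [exact Ht| |].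
    - intros c _. apply (derivable_pt_lim_opp (fun s => m1 s * exp (- Psi s))).
      apply (derivable_pt_lim_mult m1 (fun s => exp (- Psi s))); [apply (proj2 m_jacobi)|].
      apply (derivable_pt_lim_exp_comp (fun s => - Psi s)), (derivable_pt_lim_opp Psi), HPsi.
    - intros c Hc. pose proof (K_nonpos c ltac:(lra)). pose proof (jacobi_le_mul_slope c ltac:(lra)).
      assert (0 <= - K c * (c * m1 c - m c)) by (apply Rmult_le_pos; lra).
      pose proof (exp_pos (- Psi c)). nra. }
  rewrite m1_at_0 in Hdecr. unfold Psi at 1 in Hdecr.
  rewrite RInt_at_lower, Ropp_0, exp_0 in Hdecr.
  assert (Hle : Psi t <= C) by (apply HC, Ht).
  assert (exp (Psi t) <= exp C).
  { destruct (Rle_lt_or_eq_dec _ _ Hle) as [Hlt| ->]; [left; apply exp_increasing, Hlt|lra]. }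
  assert (Hinv : exp (Psi t) * exp (- Psi t) = 1)
    by (rewrite <- exp_plus, Rplus_opp_r; apply exp_0).
  pose proof (exp_pos (Psi t)). nra.
Qed.

End NonpositiveCurvature.

Lemma continuity_Gminus (K : R -> R) : continuity K -> continuity (Gminus K).
Proof.
  intros HK x. apply (continuity_pt_ext (fun t => / 2 * (K t - Rabs (K t)))).
  - intros t. unfold Gminus, Rmin.
    destruct (Rle_dec (K t) 0); [rewrite Rabs_left1|rewrite Rabs_right]; lra.
  - apply (continuity_pt_scal (fun t => K t - Rabs (K t))).
    apply (continuity_pt_minus K (fun t => Rabs (K t))); [apply HK|].
    apply (continuity_pt_comp K Rabs); [apply HK|apply Rcontinuity_abs].
Qed.

Lemma Gplus_Gminus (K : R -> R) (t : R) : Gplus K t + Gminus K t = K t.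
Proof. unfold Gplus, Gminus, Rmax, Rmin. destruct (Rle_dec (K t) 0); lra. Qed.

Lemma continuity_Gplus (K : R -> R) : continuity K -> continuity (Gplus K).
Proof.
  intros HK x. apply (continuity_pt_ext (fun t => K t - Gminus K t)).
  - intros t. rewrite <- (Gplus_Gminus K t). ring.
  - apply (continuity_pt_minus K (Gminus K)); [apply HK|apply continuity_Gminus, HK].
Qed.

Lemma finite_total_curvature_of_jacobi (K m m1 : R -> R) (L : R) :
  continuity K -> (forall t, K t <= 0) -> jacobi_system K m m1 -> m1 0 = 1 ->
  (forall t, 0 < t -> 0 < m t) -> converges_at_infty m1 L -> finite_total_curvature m.
Proof.
  intros HK Hneg Hsys H1 Hpos HL.
  pose proof (continuity_jacobi_rhs K m m1 HK Hsys) as Hrhs. destruct Hsys as [Hm Hm1].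
  exists (2 * PI * 0 + 2 * PI * (1 - L)), K, 0, (1 - L).
  split; [|split; [|split; [|reflexivity]]].
  - exists m1, (fun t => - K t * m t). split; [repeat split; auto|].
    intros t Ht. specialize (Hpos t Ht). field. lra.
  - assert (Hzero : (fun t => Gplus K t * m t) = (fun _ => 0)).
    { apply functional_extensionality. intros t. unfold Gplus.
      rewrite Rmax_right by apply Hneg. ring. }
    rewrite Hzero. apply improper_int0_of_RInt; [apply continuity_const; intros ? ?; reflexivity|].
    intros eps Heps. exists 0. intros b _.
    rewrite (RInt_of_derivative (fun _ => 0)); [|apply continuity_const; intros ? ?; reflexivity|].
    + rewrite !Rminus_diag, Rabs_R0. exact Heps.
    + intros x. apply derivable_pt_lim_const.
  - assert (Hint : forall b, RInt (fun t => Gminus K t * m t) 0 b = 1 - m1 b :> R).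
    { intros b. rewrite (RInt_of_derivative (fun t => - m1 t)).
      - rewrite H1. ring.
      - apply (continuity_mult (Gminus K) m); [apply continuity_Gminus, HK|].
        apply (derivable_continuity m m1 Hm).
      - intros x. unfold Gminus. rewrite Rmin_left by apply Hneg.
        replace (K x * m x) with (- (- K x * m x)) by ring.
        apply (derivable_pt_lim_opp m1), Hm1. }
    apply improper_int0_of_RInt.
    + apply (continuity_mult (Gminus K) m); [apply continuity_Gminus, HK|].
      apply (derivable_continuity m m1 Hm).
    + intros eps Heps. destruct (HL eps Heps) as [B HB]. exists B. intros b Hb.
      rewrite Hint. replace (1 - m1 b - (1 - L)) with (- (m1 b - L)) by ring.
      rewrite Rabs_Ropp. apply HB, Hb.
Qed.

(** * The surface with total curvature below 2 pi *)

Lemma jacobi_coefficient_even (G f f1 : R -> R) : jacobi_system G f f1 ->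
  (forall t, f (- t) = - f t) -> (forall t, 0 < t -> 0 < f t) -> forall t, G (- t) = G t.
Proof.
  intros [Hf Hf1] Hodd Hpos.
  assert (Hf1_even : forall t, f1 (- t) = 1 * f1 t).
  { intros t. rewrite (derivative_of_reflection_symmetric f f1 (-1)); [ring| |exact Hf].
    intros s. rewrite Hodd. ring. }
  assert (Hpos_case : forall t, 0 < t -> G (- t) = G t).
  { intros t Ht. pose proof (derivative_of_reflection_symmetric f1 _ 1 Hf1_even Hf1 t) as H.
    cbv beta in H. rewrite Hodd in H. specialize (Hpos t Ht).
    apply Rmult_eq_reg_r with (f t); [lra|lra]. }
  intros t. destruct (Rtotal_order t 0) as [Ht|[->|Ht]].
  - rewrite <- (Ropp_involutive t) at 2. symmetry. apply Hpos_case. lra.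
  - rewrite Ropp_0. reflexivity.
  - apply Hpos_case, Ht.
Qed.

Lemma gauss_curvature_of_jacobi (K' G f f1 : R -> R) : gauss_curvature f K' ->
  jacobi_system G f f1 -> (forall t, 0 < t -> 0 < f t) -> forall t, 0 < t -> K' t = G t.
Proof.
  intros [k1 [k2 [[Hk1 [Hk2 _]] HK']]] [Hf Hf1] Hpos t Ht.
  assert (Hk1f1 : k1 = f1).
  { apply functional_extensionality. intros x. apply (uniqueness_limite f x); auto. }
  subst k1.
  rewrite HK' by exact Ht. rewrite (uniqueness_limite f1 t (k2 t) (- G t * f t)); auto.
  specialize (Hpos t Ht). field. lra.
Qed.

Lemma jacobi_slope_gauss_bonnet (G f f1 : R -> R) (b : R) : continuity G ->
  jacobi_system G f f1 -> f1 0 = 1 -> 0 <= b ->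
  f1 b = 1 - RInt (fun s => Gplus G s * f s) 0 b - RInt (fun s => Gminus G s * f s) 0 b.
Proof.
  intros HG [Hf Hf1] H1 Hb.
  assert (Hfc : continuity f) by apply (derivable_continuity f f1 Hf).
  assert (Hp : continuity (fun s => Gplus G s * f s))
    by (apply (continuity_mult (Gplus G) f); [apply continuity_Gplus|]; auto).
  assert (Hm : continuity (fun s => Gminus G s * f s))
    by (apply (continuity_mult (Gminus G) f); [apply continuity_Gminus|]; auto).
  enough (f1 0 + RInt (fun s => Gplus G s * f s) 0 0 + RInt (fun s => Gminus G s * f s) 0 0
          = f1 b + RInt (fun s => Gplus G s * f s) 0 b + RInt (fun s => Gminus G s * f s) 0 b)
    by (rewrite H1, !RInt_at_lower in *; lra).
  apply (constant_of_derivative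
           (fun x => f1 x + RInt (fun s => Gplus G s * f s) 0 x + RInt (fun s => Gminus G s * f s) 0 x)
           (fun x => - G x * f x + Gplus G x * f x + Gminus G x * f x) 0 b Hb).
  - intros x _. apply (derivable_pt_lim_plus (fun x => f1 x + RInt (fun s => Gplus G s * f s) 0 x)).
    + apply (derivable_pt_lim_plus f1); [apply Hf1|].
      apply (derivable_pt_lim_RInt (fun s => Gplus G s * f s)), Hp.
    + apply (derivable_pt_lim_RInt (fun s => Gminus G s * f s)), Hm.
  - intros x _. rewrite <- (Gplus_Gminus G x). ring.
Qed.

Lemma jacobi_slope_limit (G f f1 : R -> R) (c : R) : continuity G ->
  jacobi_system G f f1 -> f1 0 = 1 -> (forall t, 0 < t -> 0 < f t) -> total_curvature f c ->
  exists cm, converges_at_infty f1 (1 - c / (2 * PI)) /\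
             converges_at_infty (fun b => RInt (fun s => Gminus G s * f s) 0 b) cm.
Proof.
  intros HG Hsys H1 Hpos [K' [cp [cm [HK' [Hp [Hm Hc]]]]]].
  pose proof (gauss_curvature_of_jacobi K' G f f1 HK' Hsys Hpos) as HK'G.
  assert (Hfc : continuity f) by apply (derivable_continuity f f1 (proj1 Hsys)).
  apply (RInt_converges_of_improper_int0 _ (fun s => Gplus G s * f s)) in Hp;
    [|apply (continuity_mult (Gplus G) f); [apply continuity_Gplus|]; auto
     |intros t Ht; unfold Gplus; rewrite HK'G; auto].
  apply (RInt_converges_of_improper_int0 _ (fun s => Gminus G s * f s)) in Hm;
    [|apply (continuity_mult (Gminus G) f); [apply continuity_Gminus|]; auto
     |intros t Ht; unfold Gminus; rewrite HK'G; auto].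
  exists cm. split; [|exact Hm].
  replace (1 - c / (2 * PI)) with (1 - cp - cm) by (rewrite Hc; field; apply PI_neq0).
  intros eps Heps.
  destruct (Hp (eps / 2)) as [Bp HBp]; [lra|]. destruct (Hm (eps / 2)) as [Bm HBm]; [lra|].
  exists (Rmax (Rmax Bp Bm) 0). intros b Hb.
  pose proof (Rmax_l (Rmax Bp Bm) 0). pose proof (Rmax_r (Rmax Bp Bm) 0).
  pose proof (Rmax_l Bp Bm). pose proof (Rmax_r Bp Bm).
  specialize (HBp b ltac:(lra)). specialize (HBm b ltac:(lra)).
  rewrite (jacobi_slope_gauss_bonnet G f f1 b HG Hsys H1 ltac:(lra)).
  apply Rabs_def2 in HBp. apply Rabs_def2 in HBm. apply Rabs_def1; lra.
Qed.

Lemma jacobi_linear_growth (G f f1 : R -> R) (c : R) : continuity G ->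
  jacobi_system G f f1 -> f1 0 = 1 -> (forall t, 0 < t -> 0 < f t) ->
  total_curvature f c -> c < 2 * PI ->
  exists T kappa, 0 <= T /\ 0 < kappa /\ forall t, T <= t -> t <= kappa * f t.
Proof.
  intros HG Hsys H1 Hpos Htc Hc.
  destruct (jacobi_slope_limit G f f1 c HG Hsys H1 Hpos Htc) as [_ [Hslope _]].
  set (L := 1 - c / (2 * PI)) in *.
  assert (HL : 0 < L).
  { unfold L. enough (c / (2 * PI) < 1) by lra. pose proof PI_RGT_0.
    apply (Rmult_lt_reg_r (2 * PI)); [lra|]. unfold Rdiv. rewrite Rmult_assoc, Rinv_l; lra. }
  destruct (Hslope (L / 2)) as [B HB]; [lra|].
  set (B0 := Rmax B 1).
  assert (HBB0 : B <= B0) by apply Rmax_l. assert (HB0 : 1 <= B0) by apply Rmax_r.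
  assert (Hgrowth := linear_growth_of_slope f f1 (L / 2) B0 ltac:(lra) ltac:(lra)
                       (Rlt_le _ _ (Hpos B0 ltac:(lra))) (proj1 Hsys)).
  exists (2 * B0), (4 / L). split; [lra|]. split; [apply Rdiv_lt_0_compat; lra|].
  intros t Ht.
  assert (L / 2 * t <= 2 * f t).
  { apply Hgrowth; [|exact Ht]. intros x Hx. specialize (HB x ltac:(lra)).
    apply Rabs_def2 in HB. lra. }
  apply (Rmult_le_reg_l (L / 4)); [lra|].
  replace (L / 4 * (4 / L * f t)) with (f t) by (field; lra).
  lra.
Qed.

Lemma radial_curvature_integral_bounded (G f f1 : R -> R) (c : R) : continuity G ->
  jacobi_system G f f1 -> f 0 = 0 -> f1 0 = 1 -> (forall t, 0 < t -> 0 < f t) ->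
  total_curvature f c -> c < 2 * PI ->
  exists C, forall b, 0 <= b -> RInt (fun s => - Gminus G s * s) 0 b <= C.
Proof.
  intros HG Hsys H0 H1 Hpos Htc Hc.
  destruct (jacobi_linear_growth G f f1 c HG Hsys H1 Hpos Htc Hc) as [T [kappa [HT [Hk Hlin]]]].
  destruct (jacobi_slope_limit G f f1 c HG Hsys H1 Hpos Htc) as [cm [_ Hm]].
  assert (Hfc : continuity f) by apply (derivable_continuity f f1 (proj1 Hsys)).
  assert (Hf0 : forall s, 0 <= s -> 0 <= f s).
  { intros s Hs. destruct (Rle_lt_or_eq_dec 0 s Hs) as [Hlt|<-]; [left; auto|lra]. }
  assert (Hq : forall s, 0 <= - Gminus G s)
    by (intros s; pose proof (Rmin_r (G s) 0); unfold Gminus; lra).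
  assert (Hq_cont : continuity (fun s => - Gminus G s))
    by apply (continuity_opp (Gminus G)), continuity_Gminus, HG.
  assert (Hgm : continuity (fun s => Gminus G s * f s))
    by (apply (continuity_mult (Gminus G) f); [apply continuity_Gminus|]; auto).
  assert (Hh : continuity (fun s => kappa * (- Gminus G s * f s)))
    by apply (continuity_scal (fun s => - Gminus G s * f s)), (continuity_mult _ f Hq_cont Hfc).
  assert (Hcm : forall b, 0 <= b -> cm <= RInt (fun s => Gminus G s * f s) 0 b).
  { intros b Hb. apply limit_le_RInt_of_nonpos; auto.
    intros s Hs. specialize (Hq s). specialize (Hf0 s Hs). nra. }
  exists (RInt (fun s => - Gminus G s * s) 0 T + kappa * - cm). intros b Hb.
  eapply Rle_trans.
  - apply (RInt_le_of_eventually_le _ (fun s => kappa * (- Gminus G s * f s)) T b); auto.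
    + apply (continuity_mult _ id Hq_cont), derivable_continuous, derivable_id.
    + intros s Hs. specialize (Hq s). nra.
    + intros s Hs. specialize (Hq s). specialize (Hf0 s Hs). apply Rmult_le_pos; [lra|nra].
    + intros s Hs. specialize (Hq s). specialize (Hlin s Hs).
      replace (kappa * (- Gminus G s * f s)) with (- Gminus G s * (kappa * f s)) by ring.
      apply Rmult_le_compat_l; auto.
  - rewrite (RInt_of_derivative (fun x => kappa * - RInt (fun s => Gminus G s * f s) 0 x)
               (fun s => kappa * (- Gminus G s * f s)) 0 b Hh).
    + rewrite RInt_at_lower. specialize (Hcm b Hb). nra.
    + intros x. replace (kappa * (- Gminus G x * f x)) with (kappa * - (Gminus G x * f x)) by ring.
      apply (derivable_pt_lim_scal (fun x => - RInt (fun s => Gminus G s * f s) 0 x)).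
      apply (derivable_pt_lim_opp (fun x => RInt (fun s => Gminus G s * f s) 0 x)).
      apply (derivable_pt_lim_RInt (fun s => Gminus G s * f s)), Hgm.
Qed.

Theorem lemma4p2 (f G : R -> R) :
  model_surface f ->
  continuity G ->
  jacobi_sol G f ->
  (exists c, total_curvature f c /\ c < 2 * PI) ->
  (exists m, jacobi_sol (Gminus G) m) /\
  (forall m, jacobi_sol (Gminus G) m ->
     model_surface m /\ finite_total_curvature m).
Proof.
  intros [? [? [_ [Hodd [_ Hpos]]]]] HG Hf [c [Htc Hc]].
  apply jacobi_sol_system in Hf as [f1 [Hfsys [Hf0 Hf1]]].
  pose proof (continuity_Gminus G HG) as HK.
  assert (HKneg : forall t, Gminus G t <= 0) by (intros t; apply Rmin_r).
  assert (HKeven : forall t, Gminus G (- t) = Gminus G t)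
    by (intros t; unfold Gminus; rewrite (jacobi_coefficient_even G f f1); auto).
  split; [apply jacobi_sol_exists, HK|].
  intros m Hm. apply jacobi_sol_system in Hm as [m1 [Hmsys [Hm0 Hm1]]].
  assert (Hmpos : forall t, 0 < t -> 0 < m t).
  { intros t Ht.
    pose proof (jacobi_ge_id (Gminus G) m m1 HK (fun s _ => HKneg s) Hmsys Hm0 Hm1 t ltac:(lra)).
    lra. }
  split.
  - apply (model_surface_of_jacobi (Gminus G) m m1); auto.
    apply (jacobi_system_odd (Gminus G) m m1); auto.
  - destruct (radial_curvature_integral_bounded G f f1 c HG Hfsys Hf0 Hf1 Hpos Htc Hc) as [C HC].
    destruct (converges_at_infty_of_nondecreasing m1 (exp C)) as [L HL].
    + apply (jacobi_slope_nondecreasing (Gminus G) m m1); auto.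
    + apply (jacobi_slope_bounded (Gminus G) m m1); auto.
    + apply (finite_total_curvature_of_jacobi (Gminus G) m m1 L); auto.
Qed.
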